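(* Consider the quantized estimation system described in the context. Let $D_{\mathbf{u}}=\prod_{j=1}^N\prod_{l=1}^{L_j}R_{jl}$, let $\mathbf{a}_1,\dots,\mathbf{a}_{D_{\mathbf{u}}}$ enumerate all possible realizations of $\mathbf{u}$, and define $\varphi_{\mathbf{u}}:\Theta\to\mathbb{R}^{D_{\mathbf{u}}}$ by $\varphi_{\mathbf{u}}(\theta)=[\Pr(\mathbf{a}_1\mid\theta),\dots,\Pr(\mathbf{a}_{D_{\mathbf{u}}}\mid\theta)]^T$. For each $j$ fix an enumeration $\mathbf{s}^{(j)}_1,\dots,\mathbf{s}^{(j)}_{|\mathcal{S}_j|}$ of $\mathcal{S}_j$, let $\psi_j(\theta)=[q_j^{(\mathbf{s}^{(j)}_1)}(\theta),\dots,q_j^{(\mathbf{s}^{(j)}_{|\mathcal{S}_j|-1})}(\theta)]^T$, and define $\Psi:\Theta\to\mathbb{R}^{\sum_{j=1}^N\prod_{l=1}^{L_j}R_{jl}-N}$ by $\Psi(\theta)=[\psi_1(\theta)^T,\dots,\psi_N(\theta)^T]^T$. Then $\varphi_{\mathbf{u}}$ is injective if and only if $\Psi$ is injective. Consequently, the parameter space $\Theta$ is identifiable if and only if $\Psi$ is injective. Moreover, for any $N\ge1$ and any integers $R_{jl}\ge1$, the dimension of $\Psi(\theta)$ is strictly smaller than that of $\varphi_{\mathbf{u}}(\theta)$, i.e. $\sum_{j=1}^N\prod_{l=1}^{L_j}R_{jl}-N<\prod_{j=1}^N\prod_{l=1}^{L_j}R_{jl}$.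
   Context: Setting: $\Theta\subset\mathbb{R}^{D_\theta}$ is a parameter set. There are $N\ge 1$ sensors. Sensor $j$ observes a random vector $\mathbf{x}_j$ with law $\mathscr{P}_j^\theta$ on a measurable space $(\mathscr{X}_j,\mathscr{F}_j)$, indexed by $\theta\in\Theta$; $\mathbf{x}_1,\dots,\mathbf{x}_N$ are independent. Each $\mathbf{x}_j$ is partitioned into $L_j\ge1$ disjoint subvectors $\mathbf{x}_j=[\mathbf{x}_{j1}^T,\dots,\mathbf{x}_{jL_j}^T]^T$. For each $j,l$, $\gamma_{jl}$ is an $R_{jl}$-level vector quantizer: there are disjoint regions $I_{jl}^{(1)},\dots,I_{jl}^{(R_{jl})}$ covering its domain and $\gamma_{jl}(\mathbf{x}_{jl})=r$ iff $\mathbf{x}_{jl}\in I_{jl}^{(r)}$. The (measurable) superquantizer is $\Gamma_j(\mathbf{x}_j)=[\gamma_{j1}(\mathbf{x}_{j1}),\dots,\gamma_{jL_j}(\mathbf{x}_{jL_j})]^T$, $\mathbf{u}_j=\Gamma_j(\mathbf{x}_j)$, $\mathbf{u}=[\mathbf{u}_1^T,\dots,\mathbf{u}_N^T]^T$. $\mathcal{S}_j$ is the set of all possible outcomes of $\Gamma_j$ ($|\mathcal{S}_j|=\prod_l R_{jl}$), $q_j^{(\mathbf{s})}(\theta)=\mathscr{P}_j^\theta(\Gamma_j(\mathbf{x}_j)=\mathbf{s})$, and $\Pr(\mathbf{u}\mid\theta)=\prod_{j=1}^N q_j^{(\mathbf{u}_j)}(\theta)$. Two distinct points $\theta,\theta'\in\Theta$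 are observationally equivalent if $\Pr(\mathbf{u}\mid\theta)=\Pr(\mathbf{u}\mid\theta')$ for all possible $\mathbf{u}$. A point $\theta\in\Theta$ is identifiable if no $\theta'\in\Theta\setminus\{\theta\}$ is observationally equivalent to it. The parameter space $\Theta$ is identifiable if every $\theta\in\Theta$ is identifiable. *)

From HB Require Import structures.
From mathcomp Require Import all_boot all_order all_algebra.
From mathcomp Require Import all_classical all_reals.
From mathcomp Require Import measure probability_measure.
Unset Printing Implicit Defensive.
Import Order.TTheory GRing.Theory Num.Theory.

Local Open Scope classical_set_scope.
Local Open Scope ring_scope.

Section QuantizedSystem.
Variables (K : realType) (Dth N : nat) (L : 'I_N -> nat)
  (Rq : forall j : 'I_N, 'I_(L j) -> nat).

(* S_j : the set of all possible outcomes of the superquantizer Gamma_j;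
   the level r of gamma_jl is represented by an element of 'I_(R_jl)
   (levels 0..R_jl-1 instead of 1..R_jl). *)
Definition outcome (j : 'I_N) : finType := {dffun forall k : 'I_(L j), 'I_(Rq j k)}.

Definition realization : finType := {dffun forall j : 'I_N, outcome j}.

Definition Du : nat := (\prod_(j < N) \prod_(l < L j) Rq j l)%N.

Definition cardS (j : 'I_N) : nat := (\prod_(l < L j) Rq j l)%N.

Variables (d : 'I_N -> measure_display) (T : forall j, measurableType (d j))
  (P : forall j : 'I_N, 'rV[K]_Dth -> probability (T j) K)
  (Y : forall j : 'I_N, 'I_(L j) -> Type)
  (sub : forall j (l : 'I_(L j)), T j -> Y j l)
  (gamma : forall j (l : 'I_(L j)), Y j l -> 'I_(Rq j l)).

Definition Gamma (j : 'I_N) (x : T j) : outcome j :=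
  [ffun l => gamma j l (sub j l x)].

Definition qprob (j : 'I_N) (s : outcome j) (th : 'rV[K]_Dth) : K :=
  fine (P j th (Gamma j @^-1` [set s])).

Definition Pru (u : realization) (th : 'rV[K]_Dth) : K :=
  \prod_(j < N) qprob j (u j) th.

Definition varphi (a : 'I_Du -> realization) (th : 'rV[K]_Dth) : 'rV[K]_Du :=
  \row_(i < Du) Pru (a i) th.

Definition psi (s : forall j, 'I_(cardS j) -> outcome j) (j : 'I_N)
    (th : 'rV[K]_Dth) : 'rV[K]_((cardS j).-1) :=
  \row_(i < (cardS j).-1) qprob j (s j (widen_ord (leq_pred _) i)) th.

Definition Psi (s : forall j, 'I_(cardS j) -> outcome j) (th : 'rV[K]_Dth)
  : 'rV[K]_(\sum_(j < N) (cardS j).-1) :=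
  \mxrow_(j < N) psi s j th.

Definition obs_equiv (th th' : 'rV[K]_Dth) : Prop :=
  th <> th' /\ forall u : realization, Pru u th = Pru u th'.

Definition identifiable_point (Theta : set 'rV[K]_Dth) (th : 'rV[K]_Dth) : Prop :=
  forall th', Theta th' -> th' <> th -> ~ obs_equiv th th'.

Definition identifiable (Theta : set 'rV[K]_Dth) : Prop :=
  forall th, Theta th -> identifiable_point Theta th.

End QuantizedSystem.

Definition injective_on (A B : Type) (D : set A) (f : A -> B) : Prop :=
  forall x y, D x -> D y -> f x = f y -> x = y.

Arguments outcome {N L} Rq j.
Arguments realization {N L} Rq.
Arguments Du {N L} Rq.
Arguments cardS {N L} Rq j.
Arguments Gamma {N L Rq d T Y} sub gamma j x.
Arguments qprob {K Dth N L Rq d T} P {Y} sub gamma j s th.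
Arguments Pru {K Dth N L Rq d T} P {Y} sub gamma u th.
Arguments varphi {K Dth N L Rq d T} P {Y} sub gamma a th.
Arguments psi {K Dth N L Rq d T} P {Y} sub gamma s j th.
Arguments Psi {K Dth N L Rq d T} P {Y} sub gamma s th.
Arguments obs_equiv {K Dth N L Rq d T} P {Y} sub gamma th th'.
Arguments identifiable_point {K Dth N L Rq d T} P {Y} sub gamma Theta th.
Arguments identifiable {K Dth N L Rq d T} P {Y} sub gamma Theta.
Arguments injective_on {A B} D f.

From HB Require Import structures.
From mathcomp Require Import all_boot all_order all_algebra.
From mathcomp Require Import all_classical all_reals.
From mathcomp Require Import measure probability_measure.
From mathcomp Require Import zify.
Import Order.TTheory GRing.Theory Num.Theory.
Local Open Scope classical_set_scope.
Local Open Scope ring_scope.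

(* Each q_j(theta) is a probability vector on S_j, so its last entry is
   determined by the others and Psi(theta) determines every q_j(theta).
   Conversely Pr(u | theta) = prod_j q_j^(u_j)(theta) determines the factors:
   freeze u_k = w_k for k <> j at points with q_k^(w_k)(theta) <> 0; summing
   over u_j shows that the cofactor prod_(k <> j) q_k^(w_k) is the same at
   theta and theta', and cancelling it gives q_j(theta) = q_j(theta').
   Hence varphi_u and Psi have the same fibres. *)

Lemma eq_from_sum_widen_pred (V : zmodType) n (f g : 'I_n -> V) :
  \sum_i f i = \sum_i g i ->
  (forall i : 'I_n.-1, f (widen_ord (leq_pred n) i) = g (widen_ord (leq_pred n) i)) ->
  f =1 g.
Proof.
case: n f g => [|n] f g sum_fg fg_init i; first by case: i.
have widen_pred (k : 'I_n) : widen_ord (leqnSn n) k = widen_ord (leq_pred n.+1) k.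
  exact: val_inj.
have fg_last : f ord_max = g ord_max.
  move: sum_fg; rewrite !big_ord_recr /=.
  under eq_bigr do rewrite widen_pred fg_init -widen_pred.
  exact: addrI.
case: (unliftP ord_max i) => [k ->|->] //.
by rewrite (_ : lift _ k = widen_ord (leq_pred n.+1) k) //; apply/val_inj/lift_max.
Qed.

Lemma sum_subn_lt_prod n (c : 'I_n -> nat) :
  (forall i, 0 < c i)%N -> (\sum_i c i - n < \prod_i c i)%N.
Proof.
elim: n c => [|n IHn] c c_gt0; first by rewrite !big_ord0.
have := IHn _ (fun i => c_gt0 (widen_ord (leqnSn n) i)).
have := c_gt0 ord_max; have : (0 < \prod_(i < n) c (widen_ord (leqnSn n) i))%N.
  by rewrite prodn_gt0.
rewrite !big_ord_recr /=; nia.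
Qed.

Lemma eq_factors_of_eq_prod (R : idomainType) (I : finType) (F : I -> finType)
    (p p' : forall i, F i -> R) :
  (forall i, \sum_t p i t = 1) -> (forall i, \sum_t p' i t = 1) ->
  (forall u : {dffun forall i, F i}, \prod_i p i (u i) = \prod_i p' i (u i)) ->
  forall i t, p i t = p' i t.
Proof.
move=> p_sum1 p'_sum1 eq_prod i t.
have p_support k : exists x, p k x != 0.
  apply/existsP/contraT => /existsPn p0.
  by rewrite -(oner_eq0 R) -(p_sum1 k) big1 // => x _; apply/eqP/negbNE/p0.
pose w k := xchoose (p_support k).
pose rest (q : forall k, F k -> R) := \prod_(k | k != i) q k (w k).
have eq_slice x : p i x * rest p = p' i x * rest p'.
  pose u : {dffun forall k, F k} := finfun (dfwith w i x).
  have u_off_i (q : forall k, F k -> R) : \prod_(k | k != i) q k (u k) = rest q.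
    by apply: eq_bigr => k ki; rewrite ffunE dfwithout // eq_sym.
  have := eq_prod u; rewrite (bigD1 i) // (bigD1 i (P := xpredT)) //=.
  by rewrite !u_off_i ffunE dfwithin.
have eq_rest : rest p = rest p'.
  have : \sum_x p i x * rest p = \sum_x p' i x * rest p'.
    by apply: eq_bigr => y _; apply: eq_slice.
  by rewrite -!mulr_suml p_sum1 p'_sum1 !mul1r.
have rest_neq0 : rest p != 0.
  by apply/prodf_neq0 => k _; exact: xchooseP (p_support k).
by apply: (mulIf rest_neq0); rewrite {2}eq_rest; apply: eq_slice.
Qed.

Lemma sum_probability_preimage1 d (T : measurableType d) (R : realType)
    (P : probability T R) (F : finType) (f : T -> F) :
  (forall t, measurable (f @^-1` [set t])) ->
  \sum_(t : F) fine (P (f @^-1` [set t])) = 1.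
Proof.
move=> mf; pose A (i : 'I_#|F|) := f @^-1` [set enum_val i].
have A_cover : \big[setU/set0]_(i < #|F|) A i = setT.
  apply/seteqP; split => // x _.
  by rewrite (bigD1 (enum_rank (f x))) //= /A /= enum_rankK; left.
have A_disj : trivIset setT A.
  by move=> i k _ _ [x [/= fx_i fx_k]]; apply: enum_val_inj; rewrite -fx_i.
have := measure_bigsetU_ord P xpredT (fun i => mf (enum_val i)) A_disj.
rewrite A_cover => sumA; apply: EFin_inj.
rewrite -sumEFin (reindex _ (onW_bij _ (enum_val_bij F))) -(probability_setT P).
apply: etrans (esym sumA); apply: eq_bigr => i _.
by rewrite fineK // fin_num_measure.
Qed.

Lemma injective_on_iff (A B C : Type) (D : set A) (f : A -> B) (g : A -> C) :
  (forall x y, D x -> D y -> f x = f y <-> g x = g y) ->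
  injective_on D f <-> injective_on D g.
Proof.
by move=> fg; split=> inj x y Dx Dy /(fg x y Dx Dy) => /inj; apply.
Qed.

Section QuantizedSystem.
Context {K : realType} {Dth N : nat} {L : 'I_N -> nat}
  {Rq : forall j : 'I_N, 'I_(L j) -> nat}
  {d : 'I_N -> measure_display} {T : forall j, measurableType (d j)}
  {P : forall j : 'I_N, 'rV[K]_Dth -> probability (T j) K}
  {Y : forall j : 'I_N, 'I_(L j) -> Type}
  {sub : forall j (l : 'I_(L j)), T j -> Y j l}
  {gamma : forall j (l : 'I_(L j)), Y j l -> 'I_(Rq j l)}.

Local Notation q := (qprob P sub gamma).
Local Notation Pru := (Pru P sub gamma).
Local Notation varphi := (varphi P sub gamma).

Lemma eq_varphi_iff [a : 'I_(Du Rq) -> realization Rq] [a'] :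
  cancel a' a -> forall th th',
  varphi a th = varphi a th' <-> forall u, Pru u th = Pru u th'.
Proof.
move=> a'K th th'; split => [/rowP eq_a u | eq_u].
  by have := eq_a (a' u); rewrite !mxE a'K.
by apply/rowP => i; rewrite !mxE.
Qed.

Lemma identifiable_iff_injective_varphi (Theta : set 'rV[K]_Dth) [a a'] :
  cancel a' a ->
  identifiable P sub gamma Theta <-> injective_on Theta (varphi a).
Proof.
move=> a'K; split => [ident x y Dx Dy /(eq_varphi_iff a'K) eq_u | inj_a].
  apply: contrapT => neq_xy.
  exact: (ident x Dx y Dy (nesym neq_xy)).
move=> x Dx y Dy neq_yx [_ eq_u]; apply/neq_yx/esym/inj_a => //.
exact/(eq_varphi_iff a'K).
Qed.

Hypothesis Gamma_measurable :
  forall j (u : outcome Rq j), measurable (Gamma sub gamma j @^-1` [set u]).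

Lemma sum_qprob j th : \sum_t q j t th = 1.
Proof. exact: sum_probability_preimage1. Qed.

Lemma eq_Pru_iff th th' :
  (forall u, Pru u th = Pru u th') <-> (forall j t, q j t th = q j t th').
Proof.
split => [eq_u | eq_q u]; last by apply: eq_bigr => j _; rewrite eq_q.
apply: (@eq_factors_of_eq_prod _ _ _ (fun j t => q j t th) (fun j t => q j t th'))
  => // j; exact: sum_qprob.
Qed.

Lemma eq_Psi_iff (s : forall j, 'I_(cardS Rq j) -> outcome Rq j) th th' :
  (forall j, bijective (s j)) ->
  Psi P sub gamma s th = Psi P sub gamma s th' <-> (forall j t, q j t th = q j t th').
Proof.
move=> s_bij; rewrite /Psi; split => [/eq_mxrowP eq_psi j t | eq_q]; last first.
  by apply/eq_mxrowP => j; apply/rowP => i; rewrite !mxE eq_q.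
have sum_qs x : \sum_i q j (s j i) x = 1.
  by rewrite -(sum_qprob j x) (reindex (s j)) //; apply: onW_bij.
have [s' _ s'K] := s_bij j; rewrite -(s'K t).
apply: (@eq_from_sum_widen_pred _ _ (fun i => q j (s j i) th)
                                   (fun i => q j (s j i) th')).
  by rewrite !sum_qs.
by move=> i; have /rowP/(_ i) := eq_psi j; rewrite !mxE.
Qed.

End QuantizedSystem.

Theorem lemma1 (K : realType) (Dth N : nat) (L : 'I_N -> nat)
  (Rq : forall j : 'I_N, 'I_(L j) -> nat)
  (d : 'I_N -> measure_display) (T : forall j, measurableType (d j))
  (P : forall j : 'I_N, 'rV[K]_Dth -> probability (T j) K)
  (Y : forall j : 'I_N, 'I_(L j) -> Type)
  (sub : forall j (l : 'I_(L j)), T j -> Y j l)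
  (gamma : forall j (l : 'I_(L j)), Y j l -> 'I_(Rq j l))
  (Theta : set 'rV[K]_Dth)
  (a : 'I_(Du Rq) -> realization Rq)
  (s : forall j, 'I_(cardS Rq j) -> outcome Rq j) :
  (0 < N)%N ->
  (forall j, 0 < L j)%N ->
  (forall j l, 0 < Rq j l)%N ->
  (* x_j is partitioned into the subvectors x_j1, ..., x_jL_j *)
  (forall j (x y : T j), (forall l, sub j l x = sub j l y) -> x = y) ->
  (* the superquantizer Gamma_j is measurable *)
  (forall j (u : outcome Rq j), measurable (Gamma sub gamma j @^-1` [set u])) ->
  bijective a ->
  (forall j, bijective (s j)) ->
  (injective_on Theta (varphi P sub gamma a) <-> injective_on Theta (Psi P sub gamma s))
  /\ (identifiable P sub gamma Theta <-> injective_on Theta (Psi P sub gamma s))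
  /\ (\sum_(j < N) \prod_(l < L j) Rq j l - N < \prod_(j < N) \prod_(l < L j) Rq j l)%N.
Proof.
move=> _ _ Rq_gt0 _ Gamma_mble [a' _ a'K] s_bij.
have varphi_Psi : injective_on Theta (varphi P sub gamma a)
                  <-> injective_on Theta (Psi P sub gamma s).
  apply: injective_on_iff => x y _ _.
  apply: iff_trans (eq_varphi_iff a'K x y) _.
  apply: iff_trans (eq_Pru_iff Gamma_mble x y) _.
  exact: iff_sym (eq_Psi_iff Gamma_mble s x y s_bij).
split; [exact: varphi_Psi | split].
  exact: iff_trans (identifiable_iff_injective_varphi _ a'K) varphi_Psi.
by apply: sum_subn_lt_prod => j; rewrite prodn_gt0.
Qed.
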